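(* Let $c \ge 1$ be an integer, let $m = 5c$, and let $f(x) = x^{5c} + x^{3c} + x^{2c} + x^{c} + 1 \in \mathbb{F}_2[x]$. There is a fixed, input-independent straight-line program using no AND operations and exactly $12c - 1 = \frac{12}{5}m - 1$ two-input XOR operations which, on input the coefficient bits $d_0,\dots,d_{2m-2}$ of an arbitrary polynomial $D(x)=\sum_{i=0}^{2m-2} d_i x^i \in \mathbb{F}_2[x]$ of degree at most $2m-2$, outputs the $m$ coefficient bits of the remainder of $D$ upon division by $f$.
   Context: A straight-line program over $\mathbb{F}_2$ here is a sequence of gates, each computing the XOR (sum in $\mathbb{F}_2$) of two values that are either input bits or outputs of earlier gates; each output bit is an input bit or a gate output. The number of XOR operations is the number of gates. *)

From HB Require Import structures.
From mathcomp Require Import all_boot all_order all_algebra.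
Set Implicit Arguments. Unset Strict Implicit. Unset Printing Implicit Defensive.
Import GRing.Theory.
Local Open Scope ring_scope.

(* A straight-line program over F_2 with XOR gates only.
   Wires are numbered: 0 .. nin-1 are the input bits, nin + k is the output
   of gate k.  Gate k is a pair (a, b) of wire indices, computing the XOR
   (sum in F_2) of wires a and b; well-formedness requires a, b < nin + k
   (inputs or earlier gates). *)
Record slp := SLP { slp_nin : nat; slp_gates : seq (nat * nat); slp_outs : seq nat }.

Definition slp_wf (P : slp) : bool :=
  [&& all (fun k => ((nth (0,0)%N (slp_gates P) k).1 < slp_nin P + k)%N
                && ((nth (0,0)%N (slp_gates P) k).2 < slp_nin P + k)%N)
          (iota 0 (size (slp_gates P)))
    & all (fun o => (o < slp_nin P + size (slp_gates P))%N) (slp_outs P)].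

Definition slp_xors (P : slp) : nat := size (slp_gates P).

Definition slp_wires (P : slp) (inp : seq 'F_2) : seq 'F_2 :=
  foldl (fun vals (g : nat * nat) => rcons vals (nth 0 vals g.1 + nth 0 vals g.2))
        inp (slp_gates P).

Definition slp_eval (P : slp) (inp : seq 'F_2) : seq 'F_2 :=
  map (nth 0 (slp_wires P inp)) (slp_outs P).

Definition pent (c : nat) : {poly 'F_2} :=
  'X^(5 * c) + 'X^(3 * c) + 'X^(2 * c) + 'X^c + 1.

From HB Require Import structures.
From mathcomp Require Import all_boot all_order all_algebra.
From mathcomp Require Import zify ring.

(* Cut D into ten blocks of c coefficients, D = sum_(j < 10) B_j y^j with
   y = x^c, so that f = y^5 + y^3 + y^2 + y + 1.  Over F_2 each y^j, j < 10,
   reduces modulo f to a sum of powers y^k with k < 5, hence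
   D mod f = sum_(k < 5) R_k y^k where every R_k is a sum of blocks B_j and
   has degree < c.  Coefficient t of R_k is therefore the XOR of the bits
   e_j = d_(j c + t) over the relevant j, and the five XORs of one column t
   cost 12 gates once e_5 + e_6 and e_7 + e_9 are shared.  In the last column
   the bit e_9 = d_(10 c - 1) does not exist, which saves the gate for
   e_7 + e_9. *)

Set Implicit Arguments.
Unset Strict Implicit.
Unset Printing Implicit Defensive.

Import GRing.Theory.
Local Open Scope ring_scope.

Lemma size_slp_wires P inp : size (slp_wires P inp) = (size inp + slp_xors P)%N.
Proof.
rewrite /slp_wires /slp_xors; elim: (slp_gates P) inp => [|g gs IH] inp /=.
  by rewrite addn0.
by rewrite IH size_rcons addSnnS.
Qed.

Lemma nth_slp_wires_input P inp i :
  (i < size inp)%N -> nth 0 (slp_wires P inp) i = nth 0 inp i.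
Proof.
rewrite /slp_wires; elim: (slp_gates P) inp => [|g gs IH] inp //= lt_i.
by rewrite IH ?size_rcons 1?ltnW // nth_rcons lt_i.
Qed.

Lemma nth_slp_wires_gate P inp k (g := nth (0, 0)%N (slp_gates P) k) :
  slp_wf P -> size inp = slp_nin P -> (k < slp_xors P)%N ->
  let w := nth 0 (slp_wires P inp) in w (slp_nin P + k)%N = w g.1 + w g.2.
Proof.
case: P @g => n gs outs g; rewrite /slp_wf /slp_xors /=.
move=> /andP[/allP wf_gs _] size_inp lt_k.
have /andP[lt_g1 lt_g2] : (g.1 < n + k)%N && (g.2 < n + k)%N.
  by apply: wf_gs; rewrite mem_iota.
rewrite /slp_wires /= -(cat_take_drop k gs) foldl_cat (drop_nth (0, 0)%N lt_k) /=.
set pre := foldl _ inp (take k gs).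
have size_pre : size pre = (n + k)%N.
  by rewrite (size_slp_wires (SLP n (take k gs) outs)) size_inp /slp_xors size_take lt_k.
rewrite !(nth_slp_wires_input (SLP n (drop k.+1 gs) outs)) ?size_rcons ?size_pre
  ?ltnS ?(ltnW lt_g1) ?(ltnW lt_g2) //.
by rewrite !nth_rcons size_pre ltnn eqxx lt_g1 lt_g2.
Qed.

Section PolyBlocks.
Variables (R : nzRingType) (c : nat).

Definition poly_block (s : seq R) (j : nat) : {poly R} := Poly (take c (drop (j * c) s)).

Lemma Poly_take_drop (s : seq R) : Poly s = Poly (take c s) + Poly (drop c s) * 'X^c.
Proof.
elim: s c => [|x s IH] [|n] /=.
1,2: by rewrite polyC0 mul0r addr0.
  by rewrite polyC0 add0r expr0 mulr1.
by rewrite !cons_poly_def (IH n) mulrDl exprSr mulrA addrAC.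
Qed.

Lemma coef_poly_block s j t : (t < c)%N -> (poly_block s j)`_t = nth 0 s (j * c + t).
Proof. by move=> lt_t; rewrite coef_Poly nth_take // nth_drop. Qed.

Lemma size_poly_block s j : (size (poly_block s j) <= c)%N.
Proof. by rewrite (leq_trans (size_Poly _)) // size_take_min geq_minl. Qed.

Lemma size_sum_le (I : Type) (r : seq I) (F : I -> {poly R}) n :
  (forall i, (size (F i) <= n)%N) -> (size (\sum_(i <- r) F i)%R <= n)%N.
Proof.
move=> size_F; apply: (big_ind (fun p : {poly R} => size p <= n)%N) => // [|p q].
  by rewrite size_poly0.
by move=> size_p size_q; rewrite (leq_trans (size_polyD _ _)) // geq_max size_p size_q.
Qed.

Lemma Poly_blocks n (s : seq R) : (size s <= n * c)%N ->
  Poly s = \sum_(j < n) poly_block s j * 'X^(j * c).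
Proof.
elim: n s => [|n IH] s size_s.
  by move: size_s; rewrite big_ord0 leqn0 => /nilP->.
rewrite big_ord_recl /poly_block mul0n drop0 expr0 mulr1 [LHS]Poly_take_drop.
congr (_ + _); rewrite IH ?size_drop ?leq_subLR -?mulSn // big_distrl /=.
apply: eq_bigr => j _; rewrite /bump add1n mulSnr.
by rewrite /poly_block drop_drop -mulrA -exprD.
Qed.

Hypothesis c_gt0 : (0 < c)%N.

Lemma coef_blockMXn (p : {poly R}) k i : (size p <= c)%N ->
  (p * 'X^(k * c))`_i = if (i %/ c == k)%N then p`_(i %% c) else 0.
Proof.
move=> size_p; set q := (i %/ c)%N; set r := (i %% c)%N.
have lt_r : (r < c)%N by rewrite ltn_pmod.
rewrite coefMXn (divn_eq i c) -/q -/r; case: (ltngtP q k) => [lt_qk | lt_kq | <-].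
- by have -> : (q * c + r < k * c)%N by nia.
- rewrite ifF; last by apply/negbTE; rewrite -leqNgt; nia.
  by apply: nth_default; apply: leq_trans size_p _; nia.
- by rewrite ltnNge leq_addr addKn.
Qed.

Lemma coef_sum_blocks n (p : nat -> {poly R}) i :
  (forall k, (k < n)%N -> (size (p k) <= c)%N) ->
  (\sum_(k < n) p k * 'X^(k * c))`_i =
    if (i %/ c < n)%N then (p (i %/ c)%N)`_(i %% c) else 0.
Proof.
move=> size_p; rewrite coef_sum.
under eq_bigr => k _ do rewrite coef_blockMXn ?size_p //.
case: ltnP => [lt_in | le_ni].
  rewrite (bigD1 (Ordinal lt_in)) //= eqxx big1 ?addr0 // => k.
  by rewrite -val_eqE /= eq_sym => /negbTE->.
by apply: big1 => k _; rewrite gtn_eqF // (leq_trans _ le_ni).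
Qed.

Lemma size_sum_blocks n (p : nat -> {poly R}) :
  (forall k, (k < n)%N -> (size (p k) <= c)%N) ->
  (size (\sum_(k < n) p k * 'X^(k * c))%R <= n * c)%N.
Proof.
move=> size_p; apply/leq_sizeP => i le_i.
by rewrite coef_sum_blocks // ltn_divLR // ltnNge le_i.
Qed.
End PolyBlocks.

(* [fold_blocks k] lists the j < 10 such that y^k occurs in y^j mod
   y^5 + y^3 + y^2 + y + 1 over F_2. *)
Definition fold_blocks (k : nat) : seq nat :=
  match k with
  | 0 => [:: 0; 5; 7; 8]
  | 1 => [:: 1; 5; 6; 7; 9]
  | 2 => [:: 2; 5; 6]
  | 3 => [:: 3; 5; 6; 8]
  | 4 => [:: 4; 6; 7; 9]
  | _ => [::]
  end%N.

Section PentanomialFold.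
Variables (R : comNzRingType) (y : R).
Hypothesis R_char2 : 2%N \in [pchar R].
Let f := y ^+ 5 + y ^+ 3 + y ^+ 2 + y + 1.

Lemma pentanomial_fold (B : nat -> R) :
  \sum_(j < 10) B j * y ^+ j =
  (B 5 + B 6 * y + B 7 * (y ^+ 2 + 1) + B 8 * (y ^+ 3 + y + 1)
     + B 9 * (y ^+ 4 + y ^+ 2 + y)) * f
  + \sum_(k < 5) (\sum_(j <- fold_blocks k) B j) * y ^+ k.
Proof.
have char2_eq (a b e : R) : a + e *+ 2 = b -> a = b.
  by rewrite mulrn_pchar // addr0.
(* Each reduction below is a ring identity once twice the given e is added. *)
have y5 : y ^+ 5 = f + (y ^+ 3 + y ^+ 2 + y + 1).
  by apply: (char2_eq _ _ (y ^+ 3 + y ^+ 2 + y + 1)); rewrite /f; ring.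
have y6 : y ^+ 6 = y * f + (y ^+ 4 + y ^+ 3 + y ^+ 2 + y).
  by apply: (char2_eq _ _ (y ^+ 4 + y ^+ 3 + y ^+ 2 + y)); rewrite /f; ring.
have y7 : y ^+ 7 = (y ^+ 2 + 1) * f + (y ^+ 4 + y + 1).
  apply: (char2_eq _ _ (y ^+ 5 + y ^+ 4 + y ^+ 3 + y ^+ 2 + y + 1)).
  by rewrite /f; ring.
have y8 : y ^+ 8 = (y ^+ 3 + y + 1) * f + (y ^+ 3 + 1).
  apply: (char2_eq _ _ (y ^+ 6 + y ^+ 5 + y ^+ 4 + y ^+ 3 *+ 2 + y ^+ 2 + y + 1)).
  by rewrite /f; ring.
have y9 : y ^+ 9 = (y ^+ 4 + y ^+ 2 + y) * f + (y ^+ 4 + y).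
  apply: (char2_eq _ _ (y ^+ 7 + y ^+ 6 + y ^+ 5 + y ^+ 4 *+ 2 + y ^+ 3 + y ^+ 2 + y)).
  by rewrite /f; ring.
rewrite !big_ord_recr !big_ord0 /= !big_cons !big_nil y9 y8 y7 y6 y5; ring.
Qed.
End PentanomialFold.

Definition folded_block (R : nzRingType) c (s : seq R) k : {poly R} :=
  \sum_(j <- fold_blocks k) poly_block c s j.

Lemma size_folded_block (R : nzRingType) c (s : seq R) k : (size (folded_block c s k) <= c)%N.
Proof. by apply: size_sum_le => j; apply: size_poly_block. Qed.

Lemma coef_folded_block (R : nzRingType) c (s : seq R) k t : (t < c)%N ->
  (folded_block c s k)`_t = \sum_(j <- fold_blocks k) nth 0 s (j * c + t).
Proof. by move=> lt_t; rewrite coef_sum; apply: eq_bigr => j _; rewrite coef_poly_block. Qed.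

Lemma size_pent c : (0 < c)%N -> size (pent c) = (5 * c).+1.
Proof.
move=> c_gt0; rewrite /pent -!addrA size_polyDl size_polyXn // ltnS.
do 3 (apply: leq_trans (size_polyD _ _) _; rewrite geq_max size_polyXn;
      apply/andP; split; first lia).
by rewrite size_poly1; lia.
Qed.

Lemma Poly_modp_pent c (d : seq 'F_2) : (0 < c)%N -> (size d <= 10 * c)%N ->
  Poly d %% pent c = \sum_(k < 5) folded_block c d k * 'X^(k * c).
Proof.
move=> c_gt0 size_d; set rem := RHS.
have char2 : 2%N \in [pchar {poly 'F_2}] by rewrite pchar_poly pchar_Fp.
have size_rem : (size rem <= 5 * c)%N.
  by apply: size_sum_blocks => // k _; apply: size_folded_block.
have XcE k : 'X^(k * c) = ('X^c) ^+ k :> {poly 'F_2} by rewrite mulnC exprM.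
have remE : rem = \sum_(k < 5) folded_block c d k * ('X^c) ^+ k.
  by rewrite /rem; under eq_bigr do rewrite XcE.
have pentE : pent c = ('X^c) ^+ 5 + ('X^c) ^+ 3 + ('X^c) ^+ 2 + 'X^c + 1.
  by rewrite /pent -!exprM !(mulnC c).
rewrite (Poly_blocks size_d); under eq_bigr do rewrite XcE.
by rewrite (pentanomial_fold _ char2) -remE -pentE modp_addl_mul_small // size_pent.
Qed.

Lemma coef_Poly_modp_pent c (d : seq 'F_2) i :
  (0 < c)%N -> (size d <= 10 * c)%N -> (i < 5 * c)%N ->
  (Poly d %% pent c)`_i = \sum_(j <- fold_blocks (i %/ c)%N) nth 0 d (j * c + i %% c).
Proof.
move=> c_gt0 size_d lt_i; rewrite Poly_modp_pent // coef_sum_blocks //.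
  by rewrite ltn_divLR // lt_i coef_folded_block // ltn_pmod.
by move=> k _; apply: size_folded_block.
Qed.

(* The gates of column t, placed at wires w, w + 1, ...; the wire u carries
   e 7 + e 9. *)
Definition column_core (c t w u : nat) : seq (nat * nat) :=
  let e j := (j * c + t)%N in let g i := (w + i)%N in
  [:: (e 5, e 6); (e 2, g 0); (e 1, g 0); (g 2, u); (e 4, e 6); (g 4, u);
      (e 3, e 8); (g 6, g 0); (e 0, e 5); (g 8, e 7); (g 9, e 8)].

Definition core_out (k : nat) : nat := nth 0%N [:: 10; 3; 1; 7; 5]%N k.

Lemma core_out_le k : (core_out k <= 10)%N.
Proof. by case: k => [|[|[|[|[|k]]]]] //; rewrite /core_out /= nth_nil. Qed.

Lemma column_core_wf c t w u i : (8 * c + t < w)%N -> (u < w)%N -> (i < 11)%N ->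
  let g := nth (0, 0) (column_core c t w u) i in (g.1 < w + i)%N && (g.2 < w + i)%N.
Proof.
move=> lt_e lt_u.
by do 11 (case: i => [_ | i]; first by apply/andP; split => /=; lia).
Qed.

Lemma column_core_sums (R : comNzRingType) (v e : nat -> R) c t w u :
  (forall i, (i < 11)%N -> let g := nth (0, 0) (column_core c t w u) i in
     v (w + i)%N = v g.1 + v g.2) ->
  (forall j, (j < 9)%N -> v (j * c + t)%N = e j) -> v u = e 7%N + e 9%N ->
  forall k, (k < 5)%N -> v (w + core_out k)%N = \sum_(j <- fold_blocks k) e j.
Proof.
move=> gate input vu k; rewrite /core_out.
case: k => [|[|[|[|[|//]]]]] _ /=; rewrite !big_cons big_nil.
- rewrite (gate 10) //= (gate 9) //= (gate 8) //=.
  by rewrite !input //; ring.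
- rewrite (gate 3) //= (gate 2) //= (gate 0) //=.
  by rewrite !input // vu; ring.
- rewrite (gate 1) //= (gate 0) //=.
  by rewrite !input //; ring.
- rewrite (gate 7) //= (gate 6) //= (gate 0) //=.
  by rewrite !input //; ring.
- rewrite (gate 5) //= (gate 4) //=.
  by rewrite !input // vu; ring.
Qed.

Section PentanomialCircuit.
Variable c : nat.

Local Notation nin := (10 * c - 1)%N.

(* The last column has no bit e 9, so there u is the input wire e 7 itself. *)
Definition column (t : nat) : seq (nat * nat) :=
  if (t.+1 < c)%N then
    (7 * c + t, 9 * c + t)%N :: column_core c t (nin + 12 * t).+1 (nin + 12 * t)
  else column_core c t (nin + 12 * t) (7 * c + t).

Definition column_out (t : nat) : nat :=
  if (t.+1 < c)%N then (nin + 12 * t).+1 else (nin + 12 * t)%N.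

Definition pent_gate (k : nat) : nat * nat := nth (0, 0) (column (k %/ 12)) (k %% 12).

Definition pent_out (i : nat) : nat := (column_out (i %% c) + core_out (i %/ c))%N.

Definition pent_slp : slp :=
  SLP nin (mkseq pent_gate (12 * c - 1)) (mkseq pent_out (5 * c)).

Lemma size_column t : size (column t) = (if t.+1 < c then 12 else 11)%N.
Proof. by rewrite /column; case: ifP. Qed.

Lemma pent_gate_column t j : (j < 12)%N -> pent_gate (12 * t + j) = nth (0, 0) (column t) j.
Proof.
move=> lt_j; rewrite /pent_gate.
have -> : ((12 * t + j) %/ 12 = t)%N by lia.
by have -> : ((12 * t + j) %% 12 = j)%N by lia.
Qed.

Hypothesis c_gt0 : (0 < c)%N.

Lemma column_wf t j : (t < c)%N -> (j < size (column t))%N ->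
  let g := nth (0, 0) (column t) j in
  (g.1 < nin + (12 * t + j))%N && (g.2 < nin + (12 * t + j))%N.
Proof.
move=> lt_t; rewrite /column; case: ifP => t_last.
  case: j => [|j] /= lt_j; first by apply/andP; split; lia.
  have -> : (nin + (12 * t + j.+1) = (nin + 12 * t).+1 + j)%N by lia.
  by apply: column_core_wf; lia.
by move=> /= lt_j; rewrite addnA; apply: column_core_wf; lia.
Qed.

Lemma pent_slp_wf : slp_wf pent_slp.
Proof.
apply/andP; split; apply/allP.
  move=> k; rewrite mem_iota size_mkseq => /andP[_ lt_k].
  rewrite nth_mkseq // (divn_eq k 12) mulnC pent_gate_column ?ltn_pmod //.
  apply: column_wf; rewrite ?size_column; [lia | case: ifP; lia].
move=> o /mapP[i]; rewrite mem_iota size_mkseq => /andP[_ lt_i] ->.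
have := core_out_le (i %/ c).
have lt_t : (i %% c < c)%N by rewrite ltn_pmod.
rewrite /= /pent_out /column_out; case: ifP; lia.
Qed.

Section Wires.
Variable d : seq 'F_2.
Hypothesis size_d : size d = nin.
Let wire := nth 0 (slp_wires pent_slp d).

Lemma wire_input i : (i < nin)%N -> wire i = nth 0 d i.
Proof. by move=> lt_i; rewrite /wire nth_slp_wires_input ?size_d. Qed.

Lemma wire_column t j : (t < c)%N -> (j < size (column t))%N ->
  let g := nth (0, 0) (column t) j in wire (nin + (12 * t + j)) = wire g.1 + wire g.2.
Proof.
move=> lt_t lt_j; have := lt_j; rewrite size_column => lt_j'.
have lt_k : (12 * t + j < 12 * c - 1)%N by move: lt_j'; case: ifP; lia.
rewrite /wire (nth_slp_wires_gate pent_slp_wf) /slp_xors ?size_mkseq //=.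
by rewrite nth_mkseq // pent_gate_column //; move: lt_j'; case: ifP; lia.
Qed.

Lemma wire_column_out t k : (t < c)%N -> (k < 5)%N ->
  wire (column_out t + core_out k) = \sum_(j <- fold_blocks k) nth 0 d (j * c + t).
Proof.
move=> lt_t lt_k; rewrite /column_out.
have input j : (j < 9)%N -> wire (j * c + t) = nth 0 d (j * c + t).
  by move=> lt_j; apply: wire_input; nia.
case: ifP => t_last.
  apply: (column_core_sums (e := fun j => nth 0 d (j * c + t)) (u := (nin + 12 * t)%N) _ input)
    => //.
    move=> i lt_i.
    have := wire_column (t := t) (j := i.+1) lt_t.
    by rewrite size_column /column t_last /= !addnS addnA -addSn => /(_ lt_i).
  have := wire_column (t := t) (j := 0) lt_t; rewrite size_column /column t_last addn0 => -> //=.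
  by rewrite !wire_input //; lia.
apply: (column_core_sums (e := fun j => nth 0 d (j * c + t)) (u := (7 * c + t)%N) _ input) => //.
  move=> i lt_i.
  have := wire_column (t := t) (j := i) lt_t; rewrite size_column /column t_last addnA.
  by apply; rewrite (leq_trans lt_i).
rewrite input // [nth 0 d (9 * c + t)]nth_default ?addr0 // size_d; lia.
Qed.
End Wires.
End PentanomialCircuit.

Theorem mainTheorem3 (c : nat) : (1 <= c)%N ->
  exists P : slp,
    [/\ slp_wf P,
        slp_nin P = (2 * (5 * c) - 1)%N,
        slp_xors P = (12 * c - 1)%N,
        size (slp_outs P) = (5 * c)%N
      & forall d : seq 'F_2, size d = (2 * (5 * c) - 1)%N ->
          forall i : nat, (i < 5 * c)%N ->
            nth 0 (slp_eval P d) i = (Poly d %% pent c)`_i].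
Proof.
move=> c_gt0; exists (pent_slp c); split.
- exact: pent_slp_wf.
- by rewrite /=; lia.
- by rewrite /slp_xors size_mkseq.
- by rewrite size_mkseq.
move=> d size_d i lt_i.
have size_d' : size d = (10 * c - 1)%N by rewrite size_d; lia.
rewrite /slp_eval (nth_map 0%N) ?size_mkseq // nth_mkseq // /pent_out.
rewrite wire_column_out ?ltn_pmod ?ltn_divLR // coef_Poly_modp_pent //.
by rewrite size_d'; lia.
Qed.
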